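(* For $p\in(0,1)$ and $N\ge2$, $\bar A_p\ge\min(1,c(p))$, where $$U(p):=\min_{r\in[2,\infty)}\frac{1}{r\,\bigl|\log\bigl(1-(1-p)^{r-1}\bigr)\bigr|},\qquad c(p):=\min_{w\in[0,\infty)}\bigl(U(p)\,w+(1-p)e^{-w}\bigr).$$
   Context: $\log$ is the natural logarithm, $q:=1-p$, $0^0=1$. $\bar A_p:=\min_{\vec m\in\{0,1,\dots,N\}^N}A_p(\vec m)$ where $A_p(\vec m):=\sum_{i=1}^N m_i/i+q\,0^{m_1}\exp(-\sum_{i=2}^N m_i a^i_p)$ and $a^i_p:=|\log(1-(1-p)^{i-1})|$. *)

From HB Require Import structures.
From mathcomp Require Import all_boot all_order all_algebra.
From mathcomp Require Import all_classical all_reals.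
From mathcomp Require Import all_analysis.
Set Implicit Arguments. Unset Strict Implicit. Unset Printing Implicit Defensive.
Import Order.TTheory GRing.Theory Num.Theory.
Local Open Scope ring_scope.
Local Open Scope classical_set_scope.

Section Defs.
Variable R : realType.

Definition a_coef (p : R) (i : nat) : R := `| ln (1 - (1 - p) ^+ (i.-1)) |.

(* A_p(m) for m in {0,..,N}^N; index k : 'I_N stands for i = k+1.
   0^{m_1} is written as the (one-factor) product of 0 ^+ m_1, so 0^0 = 1. *)
Definition A_p (p : R) (N : nat) (m : {ffun 'I_N -> 'I_N.+1}) : R :=
  \sum_(k < N) (m k)%:R / (k.+1)%:R
  + (1 - p) * (\prod_(k < N | val k == 0%N) (0 : R) ^+ (m k))
      * expR (- \sum_(k < N | (1 <= val k)%N) (m k)%:R * a_coef p k.+1).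

(* \bar A_p := min over the finite set {0..N}^N (seeded with the zero vector,
   which belongs to the set, so this is exactly the minimum). *)
Definition Abar (p : R) (N : nat) : R :=
  \big[Order.min/@A_p p N [ffun _ => ord0]]_(m : {ffun 'I_N -> 'I_N.+1}) @A_p p N m.

Definition U (p : R) : R :=
  inf [set 1 / (r * `| ln (1 - (1 - p) `^ (r - 1)) |) | r in [set r : R | 2 <= r]].

Definition c (p : R) : R :=
  inf [set U p * w + (1 - p) * expR (- w) | w in [set w : R | 0 <= w]].

End Defs.

(* If the coordinate m_1 vanishes, the weights a^i_p of the remaining
   coordinates are dominated by 1/(i U(p)), so the sum part of A_p(m) is at
   least U(p) w with w the exponent, and A_p(m) >= U(p) w + q e^{-w} >= c(p).
   Otherwise the term m_1/1 alone already contributes at least 1. *)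
From HB Require Import structures.
From mathcomp Require Import all_boot all_order all_algebra.
From mathcomp Require Import all_classical all_reals.
From mathcomp Require Import all_analysis.
Import Order.TTheory GRing.Theory Num.Theory.
Local Open Scope ring_scope.

Section LowerBounds.
Variables (R : realType) (p : R).
Hypothesis p_le1 : p <= 1.

Let q_ge0 : 0 <= 1 - p. Proof. by rewrite subr_ge0. Qed.

Let U_set : set R :=
  [set 1 / (r * `| ln (1 - (1 - p) `^ (r - 1)) |) | r in [set r : R | 2 <= r]].

Lemma U_set_ge0 : lbound U_set 0.
Proof.
move=> _ [r r_ge2 <-].
by rewrite divr_ge0 // mulr_ge0 // (le_trans _ r_ge2).
Qed.

Lemma U_ge0 : 0 <= U p.
Proof.
apply: (@lb_le_inf _ U_set _ _ U_set_ge0).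
by exists (1 / (2 * `| ln (1 - (1 - p) `^ (2 - 1)) |)); exists 2; rewrite /= ?lexx.
Qed.

Lemma U_mul_a_coef_le (k : nat) : (1 <= k)%N ->
  U p * a_coef p k.+1 <= (k.+1)%:R^-1.
Proof.
move=> k_ge1.
have r_ge2 : (2 : R) <= (k.+1)%:R by rewrite ler_nat ltnS.
have := ge_inf (ex_intro _ 0 U_set_ge0 : has_lbound U_set) (ex_intro2 _ _ k.+1%:R r_ge2 erefl).
rewrite -/(U p) -natr1 addrK powR_mulrn // natr1 -/(a_coef p k.+1).
have [->|a_gt0] := eqVneq (a_coef p k.+1) 0; first by move=> _; rewrite mulr0 invr_ge0.
have {}a_gt0 : 0 < a_coef p k.+1 by rewrite lt_def a_gt0 normr_ge0.
move=> /(ler_wpM2r (ltW a_gt0)).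
by rewrite mul1r invfM -mulrA mulVf ?gt_eqF // mulr1.
Qed.

Lemma U_mul_weighted_sum_le (N : nat) (m : 'I_N -> nat) :
  U p * (\sum_(k < N | (1 <= val k)%N) (m k)%:R * a_coef p k.+1)
    <= \sum_(k < N) (m k)%:R / (k.+1)%:R.
Proof.
rewrite mulr_sumr [leRHS](bigID (fun k : 'I_N => (1 <= val k)%N)) /=.
apply: ler_wpDr; first by apply: sumr_ge0 => k _; rewrite divr_ge0.
apply: ler_sum => k k_ge1.
by rewrite mulrCA ler_wpM2l // U_mul_a_coef_le.
Qed.

Lemma c_le (w : R) : 0 <= w -> c p <= U p * w + (1 - p) * expR (- w).
Proof.
move=> w_ge0; apply: ge_inf; last by exists w.
exists 0 => _ [v v_ge0 <-].
by rewrite addr_ge0 // mulr_ge0 // ?U_ge0 ?expR_ge0.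
Qed.

Lemma min1_c_le_A_p (N : nat) (m : {ffun 'I_N.+1 -> 'I_N.+2}) :
  Num.min 1 (c p) <= A_p p m.
Proof.
rewrite /A_p.
set S := \sum_(k < N.+1) _.
set w := \sum_(k < N.+1 | _) _.
have prod_at_first : \prod_(k < N.+1 | val k == 0%N) (0 : R) ^+ m k = 0 ^+ m ord0.
  by apply: big_pred1 => k /=; rewrite -val_eqE.
rewrite prod_at_first.
have m0_le_S : (m ord0)%:R <= S.
  rewrite /S (bigD1 ord0) //= divr1 lerDl.
  by apply: sumr_ge0 => k _; rewrite divr_ge0.
have [m0_eq0|m0_gt0] := posnP (m ord0).
- have w_ge0 : 0 <= w by apply: sumr_ge0 => k _; rewrite mulr_ge0 // /a_coef.
  rewrite m0_eq0 expr0 mulr1 ge_min (le_trans (c_le _ w_ge0)) ?orbT //.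
  by rewrite lerD2r U_mul_weighted_sum_le.
- rewrite ge_min; apply/orP; left.
  have one_le_m0 : 1 <= (m ord0)%:R :> R by rewrite ler1n.
  apply: le_trans one_le_m0 (le_trans m0_le_S _).
  by rewrite lerDl mulr_ge0 ?expR_ge0 // mulr_ge0.
Qed.

End LowerBounds.

Theorem lemma3 (R : realType) (p : R) (N : nat) :
  0 < p < 1 -> (2 <= N)%N -> Num.min 1 (c p) <= Abar p N.
Proof.
move=> /andP[_ /ltW p_le1]; case: N => [|N] // _.
by apply: le_bigmin => [|m _]; exact: (@min1_c_le_A_p R p p_le1).
Qed.
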